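(* Let $\mathcal{L}=(n,\mathcal{M},\mathcal{C})$ be a simple linearization and let $\mathcal{T}\subseteq\mathcal{P}$. Suppose $D(\mathcal{L})$ has a subgraph satisfying (a) its underlying undirected graph is a cycle and (b) its node set is contained in $\mathrm{succ}(\mathcal{T})$. Then $D(\mathcal{L})$ has a subgraph $Z$ satisfying (a) and (b) such that either $|U(Z)|=1$, or $Z$ satisfies all of the following: (c) for all $s\in\mathcal{S}$ and $t\in\mathcal{T}$ there is at most one directed $t$-$s$-path in $D(\mathcal{L})$; (d) $|\mathrm{pred}(s)\cap L(Z)|\le1$ for all $s\in\mathcal{S}$; (e) $|\mathrm{succ}(t)\cap U(Z)|\le1$ for all $t\in\mathcal{T}$.
   Context: $[n]=\{1,\dots,n\}$; a monomial is a nonempty subset of $[n]$; $\mathcal{S}=\{\{i\}:i\in[n]\}$. A linearization is a triple $\mathcal{L}=(n,\mathcal{M},\mathcal{C})$, where $\mathcal{M}$ is a set of monomials with $\mathcal{S}\subseteq\mathcal{M}$ and $\mathcal{C}$ is a set of AND-constraints; each AND-constraint is a set $c\subseteq\mathcal{M}$ whose union $\bigcup c$ (resultant) lies in $\mathcal{M}$. $\mathcal{P}=\mathcal{M}\setminus\mathcal{S}$. Linearizations are consistent: each $m\in\mathcal{P}$ is the resultant of some $c$ with $|m'|<|m|$ for all $m'\in c$. $\mathcal{L}$ is simple if each proper monomial is the resultant of exactly one AND-constraint and $|\mathcal{C}|=|\mathcal{P}|$. $D(\mathcal{L})$ has node set $\mathcal{M}$ and, for each $c\in\mathcal{C}$,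 arcs from $\bigcup c$ to each $m\in c$. Cycles are simple cycles. $\mathrm{succ}(W)$ (resp. $\mathrm{pred}(W)$) is the set of nodes of $D(\mathcal{L})$ reachable from (resp. from which one can reach) a node of $W$ by a directed path, including $W$; for a node $w$, $\mathrm{succ}(w)=\mathrm{succ}(\{w\})$ and $\mathrm{pred}(w)=\mathrm{pred}(\{w\})$. For a subgraph $Z$, $U(Z)$ is the set of nodes with out-degree at least $2$ in $Z$ (upper nodes) and $L(Z)$ the set of nodes with in-degree at least $2$ in $Z$ (lower nodes). *)

(* Variables [n] are 'I_n (0-based); a monomial is a
   {set 'I_n}; nodes of D(L) are monomials. *)
From mathcomp Require Import all_boot.
Set Implicit Arguments. Unset Strict Implicit. Unset Printing Implicit Defensive.

Section Defs.
Variable n : nat.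
Notation mono := {set 'I_n}.

Definition resultant (c : {set mono}) : mono := \bigcup_(m in c) m.

Definition Sing : {set mono} := [set [set i] | i : 'I_n].

Definition Proper (M : {set mono}) : {set mono} := M :\: Sing.

Definition is_linearization (M : {set mono}) (C : {set {set mono}}) : Prop :=
  (forall m, m \in M -> m != set0) /\
  Sing \subset M /\
  (forall c, c \in C -> c \subset M /\ resultant c \in M).

Definition consistent (M : {set mono}) (C : {set {set mono}}) : Prop :=
  forall m, m \in Proper M ->
    exists2 c, c \in C & resultant c = m /\ (forall m', m' \in c -> #|m'| < #|m|).

Definition simple_lin (M : {set mono}) (C : {set {set mono}}) : Prop :=
  (forall m, m \in Proper M -> #|[set c in C | resultant c == m]| = 1) /\
  #|C| = #|Proper M|.

Definition arc (C : {set {set mono}}) : rel mono :=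
  fun u v => [exists c in C, (resultant c == u) && (v \in c)].

Definition succW (C : {set {set mono}}) (W : {set mono}) : {set mono} :=
  [set v | [exists w in W, connect (arc C) w v]].
Definition predw (C : {set {set mono}}) (w : mono) : {set mono} :=
  [set u | connect (arc C) u w].

(* directed (simple) path t = x0 -> x1 -> ... -> xk = s, given by t and the
   sequence p = [x1; ...; xk] *)
Definition dpath (C : {set {set mono}}) (t : mono) (p : seq mono) (s : mono) : bool :=
  [&& path (arc C) t p, last t p == s & uniq (t :: p)].

Definition subgraph (M : {set mono}) (C : {set {set mono}})
  (VZ : {set mono}) (AZ : {set (mono * mono)}) : Prop :=
  VZ \subset M /\
  (forall u v, (u, v) \in AZ -> [/\ arc C u v, u \in VZ & v \in VZ]).

Definition und_cycle (VZ : {set mono}) (AZ : {set (mono * mono)}) : Prop :=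
  exists s : seq mono,
    [/\ uniq s, 3 <= size s, VZ = [set x in s],
        (forall u v, (u, v) \in AZ -> (v, u) \notin AZ) &
        (forall u v, ((u, v) \in AZ) || ((v, u) \in AZ) =
                     [&& u \in s, v \in s & (next s u == v) || (next s v == u)])].

Definition upper (VZ : {set mono}) (AZ : {set (mono * mono)}) : {set mono} :=
  [set v in VZ | 2 <= #|[set w | (v, w) \in AZ]|].
Definition lower (VZ : {set mono}) (AZ : {set (mono * mono)}) : {set mono} :=
  [set v in VZ | 2 <= #|[set w | (w, v) \in AZ]|].

End Defs.

(* Represent a cycle of D(L) by the cyclic sequence of its nodes: its upper nodes are
   the peaks of the sequence, its lower nodes the valleys, and a cycle has as many of
   one as of the other.  Take a cycle in succ(T) with the fewest peaks.  If it has one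
   peak we are done.  Otherwise no cycle in succ(T) has a single peak.  As arcs shrink
   monomials, D(L) is acyclic, so two directed paths from a node of succ(T) that split
   and meet again close into a cycle whose only peak is the splitting node; hence such
   paths are unique, which is (c).  For (e), if two peaks u, u' of Z are reachable from
   t, the reachable nodes form a tree, and some arc O of Z consists of unreachable nodes
   while its two neighbours are reachable.  Replacing the rest of Z by the tree paths
   from the branch point of those neighbours gives a cycle that keeps the peaks in O,
   gains at most the branch point and loses u and u': fewer peaks, a contradiction.
   (d) is the same argument in the reversed digraph. *)

From Pilot Require Import Defs.
From Stdlib Require Import Classical_Prop.
From mathcomp Require Import all_boot zify.
Set Implicit Arguments. Unset Strict Implicit. Unset Printing Implicit Defensive.

Lemma ex_minimizer (X : Type) (P : X -> Prop) (f : X -> nat) :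
  (exists x, P x) -> exists2 x, P x & forall y, P y -> f x <= f y.
Proof.
case=> x Px; move: {2}(f x) (erefl (f x)) => k.
elim/ltn_ind: k x Px => k IH x Px fx.
have [[y Py lt_yk] | no_less] := classic (exists2 y, P y & f y < k).
  exact: IH lt_yk y Py erefl.
exists x => // y Py; rewrite leqNgt fx; apply/negP => lt_yk; apply: no_less.
by exists y.
Qed.

(** * Cyclic sequences *)

Section CyclicSeq.
Variable T : eqType.
Implicit Types (s l m R : seq T) (p : pred T) (q v w x z : T).

Lemma next_cons2 l v w m : uniq (l ++ v :: w :: m) -> next (l ++ v :: w :: m) v = w.
Proof.
by move=> Us; rewrite -(next_rot (size l) Us) rot_size_cat /= eqxx.
Qed.

Lemma prev_cons2 l v w m : uniq (l ++ w :: v :: m) -> prev (l ++ w :: v :: m) v = w.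
Proof.
by move=> Us; rewrite -(prev_rot (size l) Us) rot_size_cat /= eqxx.
Qed.

Lemma prev_head v m : uniq (v :: m) -> prev (v :: m) v = last v m.
Proof.
case/andP=> vNm _; rewrite prev_nth mem_head /= (memNindex vNm).
by rewrite -[size m]/((size (v :: m)).-1) nth_last.
Qed.

Lemma next_neq_prev s v : uniq s -> 2 < size s -> v \in s -> next s v != prev s v.
Proof.
move=> Us s_gt2 /rot_to [i m rot_v].
have Um : uniq (v :: m) by rewrite -rot_v rot_uniq.
rewrite -(next_rot i Us) -(prev_rot i Us) rot_v prev_head //.
have : 2 < size (v :: m) by rewrite -rot_v size_rot.
case: m {rot_v} Um => [|a [|b m]] // Um _; rewrite /= eqxx.
by apply: contraTneq Um => ->; rewrite cons_uniq (cons_uniq (last b m)) mem_last !andbF.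
Qed.

Lemma next_catl O q R1 R2 v : uniq (O ++ q :: R1) -> uniq (O ++ q :: R2) -> v \in O ->
  next (O ++ q :: R1) v = next (O ++ q :: R2) v.
Proof.
move=> U1 U2 vO; move: U1 U2; case/splitPr: vO => l [|w m];
  by rewrite -!catA /= => U1 U2; rewrite !next_cons2.
Qed.

Lemma prev_catl O q R1 R2 v : uniq (O ++ q :: R1) -> uniq (O ++ q :: R2) ->
  last q R1 = last q R2 -> v \in O -> prev (O ++ q :: R1) v = prev (O ++ q :: R2) v.
Proof.
move=> U1 U2 lastR vO; move: U1 U2; case/splitPr: vO => l m; case/lastP: l => [|l w].
  by rewrite cat0s !cat_cons => U1 U2; rewrite !prev_head // !last_cat /= lastR.
by rewrite cat_rcons -!catA /= => U1 U2; rewrite !prev_cons2.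
Qed.

Lemma head_rev_cat z b1 b2 : exists R,
  rev b2 ++ z :: b1 = last z b2 :: R /\ last (last z b2) R = last z b1.
Proof.
case/lastP: b2 => [|b2 y]; first by exists b1.
by exists (rev b2 ++ z :: b1); rewrite rev_rcons last_rcons last_cat.
Qed.

Lemma split_first p s : has p s ->
  exists l x m, [/\ s = l ++ x :: m, p x & all (predC p) l].
Proof.
move=> /[dup] /hasP [x0 _ _] ps; case: (split_find_nth x0 ps) => x l m px pNl.
by exists l, x, m; rewrite cat_rcons; split=> //; rewrite all_predC.
Qed.

Lemma split_last p s : has p s ->
  exists l x m, [/\ s = l ++ x :: m, p x & all (predC p) m].
Proof.
rewrite -has_rev => /split_first [l [x [m [Es px pNl]]]].
exists (rev m), x, (rev l); split; rewrite ?all_rev //.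
by rewrite -[s]revK Es rev_cat rev_cons cat_rcons.
Qed.

Lemma rot_split (D : pred T) s x y : x \in s -> D x -> y \in s -> ~~ D y ->
  exists i O q R, [/\ rot i s = O ++ q :: R, O != [::], all (predC D) O, D q & D (last q R)].
Proof.
move=> xs Dx ys NDy; have [i s0 rot_x] := rot_to xs.
have [j rot_j] : exists j, rot j s = rcons s0 x.
  by exists (rot_add s i 1); rewrite -rot_rot_add rot_x rot1_cons.
have : has (predC D) (rcons s0 x) by apply/hasP; exists y; rewrite -?rot_j ?mem_rot.
case/split_first => P [b [B [EP NDb DP]]].
have lastB : last b B = x by rewrite -(last_rcons x s0 x) EP last_cat.
have : has D (b :: B) by apply/hasP; exists x; rewrite // -lastB mem_last.
case/split_first => O [q [R [EB Dq NDO]]].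
exists (rot_add s j (size P)), O, q, (R ++ P); split=> //.
- by rewrite -rot_rot_add rot_j EP rot_size_cat EB -catA.
- by case: O EB {NDO} => // [[Ebq _]]; move: NDb; rewrite /= Ebq Dq.
have -> : last q (R ++ P) = last x P.
  by rewrite last_cat -lastB -[last b B]/(last b (b :: B)) EB last_cat.
have := mem_last x P; rewrite inE => /orP [/eqP -> // | /(allP DP)].
by rewrite /= negbK.
Qed.

Lemma path_last_pred (e : rel T) x l v m : path e x (l ++ v :: m) -> e (last x l) v.
Proof. by rewrite cat_path => /andP [_] /andP []. Qed.

Lemma path_prefix (e : rel T) x l v m : path e x (l ++ v :: m) -> path e x (rcons l v).
Proof. by rewrite -cat_rcons cat_path => /andP []. Qed.

Lemma last_neq_head q R : uniq (q :: R) -> R != [::] -> last q R != q.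
Proof. by case: R => [|w R] //= /andP [qN _] _; apply: contraNneq qN => <-; apply: mem_last. Qed.

End CyclicSeq.

(** * Peaks of cycles in a ranked digraph *)

Section Peaks.
Variable T : finType.
Implicit Types (e : rel T) (A : pred T) (s O R l m : seq T) (a q v w x z : T).

Definition adj e : rel T := fun a b => e a b || e b a.

Definition rev_rel e : rel T := fun a b => e b a.

Definition peaks e s : {set T} :=
  [set v | [&& v \in s, e v (next s v) & e v (prev s v)]].

(* [s] lists, in cyclic order, the nodes of a cycle of the undirected graph underlying
   [e]; the upper nodes of that cycle are [peaks e s], its lower nodes
   [peaks (rev_rel e) s]. *)
Definition ucycle_in A e s := [&& uniq s, 2 < size s, cycle (adj e) s & all A s].

Lemma adjC e a b : adj e a b = adj e b a.
Proof. exact: orbC. Qed.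

Lemma ucycle_in_rev A e s : ucycle_in A (rev_rel e) s = ucycle_in A e s.
Proof. by rewrite /ucycle_in (@eq_cycle _ _ (adj e)) // => a b; apply: adjC. Qed.

Lemma ucycle_in_neq_nil A e s : ucycle_in A e s -> s != [::].
Proof. by case: s. Qed.

Lemma connect_rev_rel e a b : connect (rev_rel e) a b = connect e b a.
Proof. exact: connect_rev. Qed.

Lemma peaks_rot e i s : uniq s -> peaks e (rot i s) = peaks e s.
Proof. by move=> Us; apply/setP => v; rewrite !inE mem_rot next_rot ?prev_rot. Qed.

Lemma ucycle_in_rot A e i s : ucycle_in A e (rot i s) = ucycle_in A e s.
Proof. by rewrite /ucycle_in rot_uniq size_rot rot_cycle (eq_all_r (mem_rot i s)). Qed.

Lemma card_set_count s (P : pred T) : uniq s -> #|[set v | (v \in s) && P v]| = count P s.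
Proof.
move=> Us; rewrite -size_filter -(card_uniqP (filter_uniq P Us)).
by apply: eq_card => v; rewrite inE mem_filter andbC.
Qed.

Lemma card_lt_exchange (X Y Z : {set T}) z u u' : Y \subset z |: X ->
  u |: (u' |: X) \subset Z -> u != u' -> u \notin X -> u' \notin X -> #|Y| < #|Z|.
Proof.
move=> /subset_leq_card leY /subset_leq_card leZ uu' uX u'X.
apply: leq_ltn_trans leY _; apply: leq_trans leZ.
by rewrite !cardsU1 !inE negb_or uu' uX u'X; case: (z \notin X).
Qed.

Definition cycle_arcs e s : {set T * T} :=
  [set uv | [&& uv.1 \in s, uv.2 \in s, e uv.1 uv.2 &
                (next s uv.1 == uv.2) || (next s uv.2 == uv.1)]].

Lemma cycle_neighborE s v w : uniq s -> v \in s ->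
  [&& w \in s & (next s v == w) || (next s w == v)] = (w == next s v) || (w == prev s v).
Proof.
move=> Us vs; rewrite [w == next s v]eq_sym; case ws: (w \in s) => /=.
  by rewrite [next s w == v](canF_eq (prev_next Us)).
apply/esym/norP; split; apply: contraFN ws; first by move/eqP <-; rewrite mem_next.
by move/eqP ->; rewrite mem_prev.
Qed.

Lemma card_pair_pred (P : pred T) a b : a != b ->
  #|[set w | ((w == a) || (w == b)) && P w]| = P a + P b.
Proof.
move=> ab; transitivity (count P [:: a; b]); last by rewrite /= addn0.
by rewrite -card_set_count /= ?inE ?ab //; apply: eq_card => w; rewrite !inE.
Qed.

Lemma out_degree_cycle_arcs e s v : uniq s -> 2 < size s -> v \in s ->
  #|[set w | (v, w) \in cycle_arcs e s]| = e v (next s v) + e v (prev s v).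
Proof.
move=> Us s_gt2 vs; rewrite -card_pair_pred ?next_neq_prev //.
apply: eq_card => w; rewrite !inE /= vs -(cycle_neighborE w Us vs).
by case: (w \in s) (e v w) => [] []; rewrite ?andbT ?andbF.
Qed.

Lemma in_degree_cycle_arcs e s v : uniq s -> 2 < size s -> v \in s ->
  #|[set w | (w, v) \in cycle_arcs e s]| = e (next s v) v + e (prev s v) v.
Proof.
move=> Us s_gt2 vs; rewrite -(card_pair_pred (e^~ v)) ?next_neq_prev //.
apply: eq_card => w; rewrite !inE /= vs -(cycle_neighborE w Us vs) orbC.
by case: (w \in s) (e w v) => [] []; rewrite ?andbT ?andbF.
Qed.

Section Ranked.
Variables (e : rel T) (r : T -> nat).
Hypothesis e_rank : forall a b, e a b -> r b < r a.

Lemma rank_asym a b : e a b -> ~~ e b a.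
Proof. by move/e_rank => lt_ba; apply/negP => /e_rank; rewrite ltnNge ltnW. Qed.

Lemma adj_rankE a b : adj e a b -> e b a = ~~ e a b.
Proof.
case/orP=> [eab | eba]; first by rewrite eab (negbTE (rank_asym eab)).
by rewrite eba (negbTE (rank_asym eba)).
Qed.

Lemma path_rank_uniq x p : path e x p -> uniq (x :: p).
Proof.
move=> ex_p; apply: (@sorted_uniq _ [rel a b | r b < r a]) => //.
- by move=> a b c /= lt_ba lt_cb; apply: ltn_trans lt_cb lt_ba.
- by move=> a /=; rewrite ltnn.
exact: sub_path ex_p.
Qed.

Lemma peak_exists s : s != [::] -> cycle (adj e) s -> exists v, v \in peaks e s.
Proof.
case: s => [|x s'] // _ cyc_s.
case: (@arg_maxnP T x (mem (x :: s')) r (mem_head x s')) => v vs vmax.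
have {}vs : v \in x :: s' := vs.
have adj_max w : w \in x :: s' -> adj e v w -> e v w.
  move=> ws /adj_rankE ewv; rewrite -[e v w]negbK -ewv.
  by apply/negP => /e_rank; apply/negP; rewrite -leqNgt; apply: vmax.
exists v; rewrite inE vs !adj_max ?mem_next ?mem_prev ?(next_cycle cyc_s) //.
by rewrite adjC (prev_cycle cyc_s).
Qed.

Lemma valley_exists s :
  s != [::] -> cycle (adj e) s -> exists v, v \in peaks (rev_rel e) s.
Proof.
case: s => [|x s'] // _ cyc_s.
case: (@arg_minnP T x (mem (x :: s')) r (mem_head x s')) => v vs vmin.
have {}vs : v \in x :: s' := vs.
have adj_min w : w \in x :: s' -> adj e v w -> e w v.
  by move=> ws /adj_rankE ->; apply/negP => /e_rank; rewrite ltnNge vmin.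
exists v; rewrite inE /rev_rel vs !adj_min ?mem_next ?mem_prev ?(next_cycle cyc_s) //.
by rewrite adjC (prev_cycle cyc_s).
Qed.

Lemma peakN_next s v : e (next s v) v -> v \notin peaks e s.
Proof. by move/rank_asym/negbTE => Nnext; rewrite inE Nnext andbF. Qed.

Lemma peakN_prev s v : e (prev s v) v -> v \notin peaks e s.
Proof. by move/rank_asym/negbTE => Nprev; rewrite inE Nprev !andbF. Qed.

Lemma card_peaks_rev s :
  uniq s -> cycle (adj e) s -> #|peaks (rev_rel e) s| = #|peaks e s|.
Proof.
move=> Us cyc_s; pose g v := e v (next s v); pose h v := g (prev s v).
have hE v : v \in s -> h v = e (prev s v) v by move=> vs; rewrite /h /g next_prev.
have -> : peaks e s = [set v | (v \in s) && (~~ h v && g v)].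
  apply/setP => v; rewrite !inE; case vs: (v \in s) => //=.
  by rewrite hE // -adj_rankE ?prev_cycle // andbC.
have -> : peaks (rev_rel e) s = [set v | (v \in s) && (~~ g v && h v)].
  apply/setP => v; rewrite !inE /rev_rel; case vs: (v \in s) => //=.
  by rewrite hE // -adj_rankE ?next_cycle.
have count_h : count h s = count g s.
  rewrite -(count_map (prev s) g); apply/permP/uniq_perm => //.
    by rewrite map_inj_in_uniq // => a b _ _ /(can_inj (next_prev Us)).
  move=> v; apply/mapP/idP => [[w ws ->] | vs]; first by rewrite mem_prev.
  by exists (next s v); rewrite ?mem_next // prev_next.
have count_split (a b : pred T) :
    count a s = count (fun v => b v && a v) s + count (fun v => ~~ b v && a v) s.
  by rewrite -size_filter -(count_predC b) !count_filter.
rewrite !card_set_count //; move: count_h.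
rewrite (count_split g h) (count_split h g) (eq_count (a2 := fun v => h v && g v)) => [|v].
  by move/addnI.
exact: andbC.
Qed.

(* The spliced cycle [O ++ rev b2 ++ z :: b1] runs through [O], back along [b2] to [z]
   and then along [b1]. *)
Lemma peak_splice_mem O z (b1 b2 : seq T) v : uniq (O ++ rev b2 ++ z :: b1) ->
  path e z b1 -> path e z b2 -> v \in peaks e (O ++ rev b2 ++ z :: b1) -> (v == z) || (v \in O).
Proof.
move=> Us eb1 eb2 vpeak; move: (vpeak); rewrite inE !mem_cat mem_rev inE.
case/andP=> /or4P [-> | vb2 | -> | vb1] _; rewrite ?orbT //; apply: contraTT vpeak => _.
- move: Us eb2; case/splitPr: vb2 => l m Us /path_last_pred evl.
  have [R [ER _]] := head_rev_cat z b1 l.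
  have Es : O ++ rev (l ++ v :: m) ++ z :: b1 = (O ++ rev m) ++ v :: last z l :: R.
    by rewrite rev_cat rev_cons cat_rcons -!catA /= ER.
  by rewrite Es; apply: peakN_next; rewrite next_cons2 -?Es.
- move: Us eb1; case/splitPr: vb1 => l m Us /path_last_pred evl.
  have Es : O ++ rev b2 ++ z :: l ++ v :: m = (O ++ rev b2 ++ belast z l) ++ last z l :: v :: m.
    by rewrite -!catA -cat_cons lastI cat_rcons.
  by rewrite Es; apply: peakN_prev; rewrite prev_cons2 -?Es.
Qed.

Lemma cycle_splice O z (b1 b2 : seq T) : path e z b1 -> path e z b2 ->
  path (adj e) (last z b1) (O ++ [:: last z b2]) -> cycle (adj e) (O ++ rev b2 ++ z :: b1).
Proof.
move=> eb1 eb2 eO; rewrite catA cycle_catC /=.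
have -> : rcons (b1 ++ O ++ rev b2) z = b1 ++ (O ++ [:: last z b2]) ++ rev (belast z b2).
  by rewrite !rcons_cat -rev_cons lastI rev_rcons -catA.
rewrite cat_path (sub_path _ eb1) => [|a b eab]; last by rewrite /adj eab.
rewrite cat_path eO last_cat /= rev_path.
by apply: sub_path eb2 => a b eab; rewrite /adj eab orbT.
Qed.

Section Cycles.
Variable A : pred T.

Lemma single_peak_of_paths z (b1 b2 : seq T) :
  uniq (rev b2 ++ z :: b1) -> 2 < size (rev b2 ++ z :: b1) -> all A (rev b2 ++ z :: b1) ->
  path e z b1 -> path e z b2 -> e (last z b2) (last z b1) ->
  exists2 s, ucycle_in A e s & #|peaks e s| = 1.
Proof.
set s := rev b2 ++ z :: b1 => Us s_gt2 As eb1 eb2 e21.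
have cyc_s : cycle (adj e) s.
  by apply: (cycle_splice (O := [::]) eb1 eb2); rewrite /= andbT adjC /adj e21.
exists s; first by rewrite /ucycle_in Us s_gt2 cyc_s.
apply/eqP; rewrite eqn_leq -{1}(cards1 z) subset_leq_card; last first.
  apply/subsetP => v v_pk; have := peak_splice_mem (O := [::]) Us eb1 eb2 v_pk.
  by rewrite inE orbF.
by apply/card_gt0P; apply: (peak_exists _ cyc_s); rewrite /s; case: (rev b2).
Qed.

(* The cycle follows [p1] up to the first node [w] of [p2] lying on [p1], and returns
   along [p2]. *)
Lemma single_peak_of_diverging_paths x y1 y2 p1 p2 :
  path e x (y1 :: p1) -> path e x (y2 :: p2) -> y1 != y2 -> last y1 p1 = last y2 p2 ->
  all A (x :: y1 :: p1) -> all A (y2 :: p2) -> exists2 s, ucycle_in A e s & #|peaks e s| = 1.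
Proof.
move=> ep1 ep2 ne12 same_last Ap1 Ap2.
have : has (mem (y1 :: p1)) (y2 :: p2).
  by apply/hasP; exists (last y2 p2); rewrite ?mem_last // -same_last; apply: mem_last.
case/split_first => a [w [m2 [E2 w_p1 aNp1]]].
have [c [m1 E1]] : exists c m1, y1 :: p1 = c ++ w :: m1.
  by case/splitPr: w_p1 => c m1; exists c, m1.
rewrite E1 in ep1 Ap1 aNp1; rewrite E2 in ep2 Ap2.
have ec := path_prefix ep1; have ea : path e x a by move: ep2; rewrite cat_path => /andP [].
apply: (single_peak_of_paths _ _ _ ec ea); last by rewrite last_rcons (path_last_pred ep2).
- have := path_rank_uniq ea; rewrite cons_uniq => /andP [xNa Ua].
  rewrite cat_uniq rev_uniq Ua (path_rank_uniq ec) andbT andTb.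
  apply/hasPn => v; rewrite mem_rev inE => /orP [/eqP -> // | v_cw].
  apply/negP => va; have := allP aNp1 v va; rewrite /= mem_cat inE.
  by rewrite mem_rcons inE in v_cw; case/orP: v_cw => ->; rewrite ?orbT.
- rewrite size_cat size_rev /= size_rcons !addnS !ltnS addn_gt0.
  apply: contraT; rewrite negb_or -!leqNgt !leqn0 !size_eq0 => /andP [/eqP a0 /eqP c0].
  by move: E1 E2 ne12; rewrite a0 c0 => [[-> _]] [-> _]; rewrite eqxx.
apply/allP => v; rewrite mem_cat mem_rev inE mem_rcons inE.
case/or4P => [va | /eqP -> | /eqP -> | vc].
- by apply: (allP Ap2); rewrite mem_cat va.
- exact: (allP Ap1 x (mem_head _ _)).
- by apply: (allP Ap2); rewrite mem_cat inE eqxx orbT.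
by apply: (allP Ap1); rewrite inE mem_cat vc orbT.
Qed.

Lemma ucycle_in_splice O q R z (b1 b2 : seq T) :
  ucycle_in A e (O ++ q :: R) -> O != [::] -> last q R != q ->
  path e z b1 -> path e z b2 -> last z b1 = last q R -> last z b2 = q ->
  uniq (z :: b1 ++ b2) -> all A (z :: b1 ++ b2) -> ~~ has (mem O) (z :: b1 ++ b2) ->
  ucycle_in A e (O ++ rev b2 ++ z :: b1).
Proof.
case/and4P=> Us _ cyc_s As nonempty_O pNq eb1 eb2 lb1 lb2 Ub Ab NOb.
have Ub' : uniq (O ++ rev b2 ++ z :: b1).
  rewrite (perm_uniq (_ : perm_eq _ (O ++ z :: b1 ++ b2))); last first.
    by rewrite perm_cat2l perm_catC -cat_cons perm_cat2l perm_rev.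
  by rewrite cat_uniq Ub NOb !andbT; move: Us; rewrite cat_uniq => /andP [].
rewrite /ucycle_in Ub' size_cat size_cat /= size_rev.
have -> : 2 < size O + (size b2 + (size b1).+1).
  have : 0 < size O by rewrite lt0n size_eq0.
  have : 0 < size b2 + size b1.
    rewrite addn_gt0 !lt0n !size_eq0; apply: contraR pNq => /norP [/negPn/eqP b20 /negPn/eqP b10].
    by rewrite -lb1 -lb2 b10 b20.
  lia.
rewrite (cycle_splice eb1 eb2) ?lb1 ?lb2.
  move: As Ab; rewrite /= !all_cat all_rev => /andP [AO _] /and3P [Az Ab1 Ab2].
  by rewrite /= AO Az Ab1 Ab2.
by move: cyc_s; rewrite (cycle_path q) last_cat /= -cat1s catA cat_path => /andP [].
Qed.

Lemma peaks_splice_sub O q R z (b1 b2 : seq T) :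
  uniq (O ++ q :: R) -> uniq (O ++ rev b2 ++ z :: b1) ->
  path e z b1 -> path e z b2 -> last z b1 = last q R -> last z b2 = q ->
  peaks e (O ++ rev b2 ++ z :: b1) \subset z |: (peaks e (O ++ q :: R) :&: [set v in O]).
Proof.
move=> Us Us' eb1 eb2 lb1 lb2; apply/subsetP => v v_pk.
have := peak_splice_mem Us' eb1 eb2 v_pk; rewrite !inE.
case/orP => [-> // | vO]; rewrite vO andbT.
have [R' [ER' lR']] := head_rev_cat z b1 b2; rewrite lb2 in ER' lR'.
rewrite ER' in Us' v_pk; move: v_pk; rewrite !inE !mem_cat vO.
by rewrite (next_catl Us' Us vO) (prev_catl Us' Us (etrans lR' lb1) vO) => ->; rewrite orbT.
Qed.

Hypothesis no_single_peak : forall s, ucycle_in A e s -> #|peaks e s| != 1.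

Lemma path_unique x p1 p2 : path e x p1 -> path e x p2 -> last x p1 = last x p2 ->
  all A (x :: p1) -> all A (x :: p2) -> p1 = p2.
Proof.
elim: p1 x p2 => [|y1 p1 IH] x [|y2 p2] //.
- move=> _ /path_rank_uniq; rewrite cons_uniq => /andP [xNp _] /= x_last.
  by move: xNp; rewrite x_last mem_last.
- move=> /path_rank_uniq; rewrite cons_uniq => /andP [xNp _] _ /= x_last.
  by move: xNp; rewrite -x_last mem_last.
have [<- | ne12] := eqVneq y1 y2 => ep1 ep2 same_last Ap1 /andP [_ Ap2].
  have {}ep1 : path e y1 p1 by case/andP: ep1.
  have {}ep2 : path e y1 p2 by case/andP: ep2.
  have {}Ap1 : all A (y1 :: p1) by case/andP: Ap1.
  by congr (_ :: _); apply: IH ep1 ep2 same_last Ap1 Ap2.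
have [s s_cyc s_one] := single_peak_of_diverging_paths ep1 ep2 ne12 same_last Ap1 Ap2.
by move: (no_single_peak s_cyc); rewrite s_one.
Qed.

Section Root.
Variable x0 : T.
(* For D(L) this holds because succ(T) is closed under arcs, for the reversed digraph
   because the nodes of a path ending in succ(T) are reachable from that end in D(L). *)
Hypothesis A_path : forall p, path e x0 p -> A (last x0 p) -> all A (x0 :: p).

Let reached v := A v && connect e x0 v.

Lemma path_reached p : path e x0 p -> A (last x0 p) -> all reached (x0 :: p).
Proof.
move=> ep Alast; apply/allP => v vp.
by rewrite /reached (allP (A_path ep Alast)) // (path_connect ep vp).
Qed.

Lemma path_unique_root p1 p2 : path e x0 p1 -> path e x0 p2 ->
  last x0 p1 = last x0 p2 -> A (last x0 p1) -> p1 = p2.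
Proof.
move=> ep1 ep2 same_last Alast; have Alast2 : A (last x0 p2) by rewrite -same_last.
exact: path_unique ep1 ep2 same_last (A_path ep1 Alast) (A_path ep2 Alast2).
Qed.

Lemma branch_paths p q : reached p -> reached q -> exists z b1 b2,
  [/\ path e z b1, path e z b2, last z b1 = p, last z b2 = q &
      uniq (z :: b1 ++ b2) && all reached (z :: b1 ++ b2)].
Proof.
move=> /andP [Ap /connectP [fp ep lp]] /andP [Aq /connectP [fq eq lq]]; subst p q.
have : has (mem (x0 :: fq)) (x0 :: fp) by rewrite /= mem_head.
case/split_last => l [z [b1 [Ep zq b1N]]].
have [l2 [b2 Eq]] : exists l2 b2, x0 :: fq = l2 ++ z :: b2.
  by case/splitPr: zq => l2 b2; exists l2, b2.
have /andP [_ eb1] : sorted e (rcons l z) && path e z b1 by rewrite -sorted_cat_cons -Ep.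
have /andP [_ eb2] : sorted e (rcons l2 z) && path e z b2 by rewrite -sorted_cat_cons -Eq.
have Uzb1 : uniq (z :: b1) by move: (path_rank_uniq ep); rewrite Ep cat_uniq => /and3P [].
have Uzb2 : uniq (z :: b2) by move: (path_rank_uniq eq); rewrite Eq cat_uniq => /and3P [].
have b1_fp v : v \in z :: b1 -> v \in x0 :: fp by rewrite Ep mem_cat => ->; rewrite orbT.
have b2_fq v : v \in b2 -> v \in x0 :: fq by rewrite Eq mem_cat inE => ->; rewrite !orbT.
exists z, b1, b2; split=> //.
- by rewrite -[last x0 fp]/(last x0 (x0 :: fp)) Ep last_cat.
- by rewrite -[last x0 fq]/(last x0 (x0 :: fq)) Eq last_cat.
apply/andP; split.
  rewrite -cat_cons cat_uniq Uzb1; move: Uzb2; rewrite cons_uniq => /andP [zNb2 ->].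
  rewrite andbT; apply/hasPn => v vb2; rewrite inE negb_or.
  rewrite (contraNneq _ zNb2) => [/= | <- //].
  by apply: contraL (b2_fq v vb2) => vb1; apply: (allP b1N).
apply/allP => v; rewrite -cat_cons mem_cat => /orP [/b1_fp | /b2_fq] v_in.
  exact: (allP (path_reached ep Ap) v v_in).
exact: (allP (path_reached eq Aq) v v_in).
Qed.

(* A valley with both neighbours reached would end two different paths from [x0]. *)
Lemma exists_unreached s : ucycle_in A e s -> exists2 y, y \in s & ~~ reached y.
Proof.
move=> s_cyc; have [Us s_gt2 cyc_s As] := and4P s_cyc.
have [v] := valley_exists (ucycle_in_neq_nil s_cyc) cyc_s.
rewrite inE /rev_rel => /and3P [vs env epv].
have [Rn | NRn] := boolP (reached (next s v)); last by exists (next s v); rewrite ?mem_next.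
have [Rp | NRp] := boolP (reached (prev s v)); last by exists (prev s v); rewrite ?mem_prev.
case/andP: Rn => _ /connectP [pn epn ln]; case/andP: Rp => _ /connectP [pp epp lp].
have : rcons pn v = rcons pp v.
  apply: path_unique_root; rewrite ?last_rcons ?(allP As) //.
    by rewrite rcons_path epn -ln env.
  by rewrite rcons_path epp -lp epv.
case/rcons_inj => /(congr1 (last x0)); rewrite -ln -lp => /eqP.
by rewrite (negbTE (next_neq_prev Us s_gt2 vs)).
Qed.

(* Cut [s] at an arc [O] of unreached nodes whose two neighbours are reached and close it
   with the tree paths from their branch point [z]: the peaks in [O] survive, [z] may
   become a peak, and [u], [u'] disappear. *)
Lemma fewer_peaks s u u' : ucycle_in A e s -> u \in peaks e s -> u' \in peaks e s ->
  connect e x0 u -> connect e x0 u' -> u != u' ->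
  exists2 s', ucycle_in A e s' & #|peaks e s'| < #|peaks e s|.
Proof.
move=> s_cyc u_pk u'_pk x0u x0u' uu'.
have [Us _ _ As] := and4P s_cyc.
have peak_reached w : w \in peaks e s -> connect e x0 w -> w \in s /\ reached w.
  by rewrite inE /reached => /andP [ws _] ->; rewrite ws (allP As).
have [us Ru] := peak_reached u u_pk x0u; have [_ Ru'] := peak_reached u' u'_pk x0u'.
have [y ys NRy] := exists_unreached s_cyc.
have [i [O [q [R [rot_s nonempty_O NRO Rq Rp]]]]] := rot_split us Ru ys NRy.
rewrite -(peaks_rot e i Us) rot_s in u_pk u'_pk *.
rewrite -(ucycle_in_rot A e i) rot_s in s_cyc.
have notO w : reached w -> w \notin O by move=> Rw; apply: contraL Rw => /(allP NRO).
have in_qR w : reached w -> w \in peaks e (O ++ q :: R) -> w \in q :: R.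
  by move=> /notO wNO; rewrite inE mem_cat (negbTE wNO) => /andP [].
have R_nil : R != [::].
  apply/eqP => R0; move: (in_qR u Ru u_pk) (in_qR u' Ru' u'_pk) uu'.
  by rewrite R0 !inE => /eqP -> /eqP ->; rewrite eqxx.
have [Us' _ _ _] := and4P s_cyc.
have pNq : last q R != q.
  by apply: last_neq_head R_nil; move: Us'; rewrite cat_uniq => /and3P [].
have [z [b1 [b2 [eb1 eb2 lb1 lb2 /andP [Ub Rb]]]]] := branch_paths Rp Rq.
have ONb : ~~ has (mem O) (z :: b1 ++ b2) by apply/hasPn => w /(allP Rb) /notO.
have Ab : all A (z :: b1 ++ b2) by apply: sub_all Rb => w /andP [].
have s'_cyc := ucycle_in_splice s_cyc nonempty_O pNq eb1 eb2 lb1 lb2 Ub Ab ONb.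
exists (O ++ rev b2 ++ z :: b1) => //; have [Us'' _ _ _] := and4P s'_cyc.
apply: (card_lt_exchange (peaks_splice_sub Us' Us'' eb1 eb2 lb1 lb2) _ uu').
- apply/subsetP => w; rewrite !inE => /or3P [/eqP -> | /eqP -> | /andP [] //].
    by rewrite inE in u_pk.
  by rewrite inE in u'_pk.
- by rewrite !inE (negbTE (notO u Ru)) andbF.
by rewrite !inE (negbTE (notO u' Ru')) andbF.
Qed.

End Root.

End Cycles.

End Ranked.
End Peaks.

(** * Cycles of the digraph of a linearization *)

Section CycleSubgraph.
Variables (n : nat) (e : rel {set 'I_n}).
Implicit Types (s : seq {set 'I_n}) (A : pred {set 'I_n}).

Lemma upper_cycle_arcs s : uniq s -> 2 < size s ->
  upper [set x in s] (cycle_arcs e s) = peaks e s.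
Proof.
move=> Us s_gt2; apply/setP => v; rewrite !inE; case vs: (v \in s) => //=.
by rewrite out_degree_cycle_arcs //; case: (e v (next s v)) (e v (prev s v)) => [] [].
Qed.

Lemma lower_cycle_arcs s : uniq s -> 2 < size s ->
  lower [set x in s] (cycle_arcs e s) = peaks (rev_rel e) s.
Proof.
move=> Us s_gt2; apply/setP => v; rewrite !inE /rev_rel; case vs: (v \in s) => //=.
by rewrite in_degree_cycle_arcs //; case: (e (next s v) v) (e (prev s v) v) => [] [].
Qed.

Lemma ucycle_in_of_und_cycle A (VZ : {set {set 'I_n}}) (AZ : {set {set 'I_n} * {set 'I_n}}) :
  (forall u v, (u, v) \in AZ -> e u v) ->
  und_cycle VZ AZ -> {subset VZ <= A} -> exists s, ucycle_in A e s.
Proof.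
move=> AZ_e [s [Us s_gt2 VZE _ AZ_next]] VZ_A; exists s.
rewrite /ucycle_in Us s_gt2 /=; apply/andP; split.
  apply: (cycle_from_next Us) => v vs.
  have := AZ_next v (next s v); rewrite vs mem_next vs eqxx /=.
  by case/orP => /AZ_e evw; rewrite /adj evw ?orbT.
by apply/allP => v vs; apply: VZ_A; rewrite VZE inE.
Qed.

Variable r : {set 'I_n} -> nat.
Hypothesis e_rank : forall a b, e a b -> r b < r a.

Lemma und_cycle_cycle_arcs A s : ucycle_in A e s -> und_cycle [set x in s] (cycle_arcs e s).
Proof.
case/and4P=> Us s_gt2 cyc_s _; exists s; split=> // [u v | u v].
  rewrite !inE /= => /and4P [_ _ euv _].
  by apply/negP => /and4P [_ _ evu _]; move: (rank_asym e_rank euv); rewrite evu.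
rewrite !inE /= [(next s v == u) || _]orbC.
case us: (u \in s); case vs: (v \in s) => //=.
case nb: ((next s u == v) || (next s v == u)); rewrite ?andbF ?andbT //.
case/orP: nb => /eqP <-; first by have := next_cycle cyc_s us.
by have := next_cycle cyc_s vs; rewrite adjC /adj orbC.
Qed.

End CycleSubgraph.

Section Linearization.
Variables (n : nat) (M : {set {set 'I_n}}) (C : {set {set {set 'I_n}}}) (T : {set {set 'I_n}}).
Hypotheses (HL : is_linearization M C) (HC : consistent M C) (HS : simple_lin M C)
  (HT : T \subset Proper M).

Local Notation mono := {set 'I_n}.
Local Notation arcC := (Defs.arc C).
Local Notation succT := [in succW C T].

Lemma resultant_proper c : c \in C -> resultant c \in Proper M.
Proof.
have sub_P : Proper M \subset @resultant n @: C.
  apply/subsetP => m mP.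
  have /card_gt0P [c'] : 0 < #|[set c in C | resultant c == m]| by rewrite (HS.1 m mP).
  by rewrite inE => /andP [c'C /eqP <-]; apply: imset_f.
have -> : Proper M = @resultant n @: C.
  by apply/eqP; rewrite eqEcard sub_P -HS.2 leq_imset_card.
exact: imset_f.
Qed.

Lemma arc_card_lt u v : arcC u v -> #|v| < #|u|.
Proof.
case/existsP => c /and3P [cC /eqP ru vc].
have uP : u \in Proper M by rewrite -ru resultant_proper.
have [c' c'C [rc' smaller]] := HC uP.
have /cards1P [c0 E] : #|[set c in C | resultant c == u]| == 1 by rewrite (HS.1 u uP).
have : c \in [set c0] by rewrite -E inE cC ru eqxx.
have : c' \in [set c0] by rewrite -E inE c'C rc' eqxx.
by rewrite !inE => /eqP Ec' /eqP Ec; apply: smaller; rewrite Ec' -Ec.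
Qed.

Lemma rev_arc_rank u v : rev_rel arcC u v -> n - #|v| < n - #|u|.
Proof.
by move/arc_card_lt; rewrite ltn_sub2lE // -[X in _ <= X]card_ord max_card.
Qed.

Lemma succW_connect u v : u \in succW C T -> connect arcC u v -> v \in succW C T.
Proof.
rewrite !inE => /existsP [t /andP [tT tu]] uv.
by apply/existsP; exists t; rewrite tT (connect_trans tu uv).
Qed.

Lemma succW_sub_M : succW C T \subset M.
Proof.
apply/subsetP => v; rewrite inE => /existsP [t /andP [tT /connectP [p ep ->]]].
case/lastP: p ep => [_ | p w]; first by move/subsetP: HT => /(_ t tT); rewrite inE => /andP [].
rewrite rcons_path last_rcons => /andP [_ /existsP [c /and3P [cC _ wc]]].
by have [_ [_ /(_ c cC) [/subsetP c_M _]]] := HL; apply: c_M.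
Qed.

Lemma succW_path x p : x \in succW C T -> path arcC x p -> all succT (x :: p).
Proof. by move=> xS ep; apply/allP => v /(path_connect ep); apply: succW_connect. Qed.

Lemma succW_rev_path x p : path (rev_rel arcC) x p -> last x p \in succW C T ->
  all succT (x :: p).
Proof.
move=> ep lS; have : path arcC (last x p) (rev (belast x p)) by rewrite rev_path.
move/(succW_path lS)/allP => allS; apply/allP => v.
by rewrite lastI mem_rcons => v_in; apply: allS; rewrite inE mem_rev -in_cons.
Qed.

Lemma mem_succW1 t v : (v \in succW C [set t]) = connect arcC t v.
Proof.
rewrite inE; apply/existsP/idP => [[w /andP [/set1P -> //]] | tv].
by exists t; rewrite set11.
Qed.

Lemma mem_predw w v : (v \in predw C w) = connect arcC v w.
Proof. by rewrite inE. Qed.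

Lemma T_sub_succW t : t \in T -> t \in succW C T.
Proof. by move=> tT; rewrite inE; apply/existsP; exists t; rewrite tT connect0. Qed.

Lemma subgraph_cycle_arcs s : all succT s -> subgraph M C [set x in s] (cycle_arcs arcC s).
Proof.
move=> sS; split.
  by apply/subsetP => v; rewrite inE => /(allP sS) /(subsetP succW_sub_M).
by move=> u v; rewrite !inE /= => /and4P [-> -> -> _].
Qed.

Section MinimalCycle.
Variable s : seq mono.
Hypotheses (s_cyc : ucycle_in succT arcC s)
  (s_min : forall s', ucycle_in succT arcC s' -> #|peaks arcC s| <= #|peaks arcC s'|)
  (s_peaks : #|peaks arcC s| != 1).

Lemma no_single_peak s' : ucycle_in succT arcC s' -> #|peaks arcC s'| != 1.
Proof.
move=> s'_cyc; apply: contra s_peaks => /eqP one; rewrite eqn_leq -{1}one s_min //=.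
have [_ _ cyc_s _] := and4P s_cyc.
by apply/card_gt0P; apply: (peak_exists arc_card_lt (ucycle_in_neq_nil s_cyc) cyc_s).
Qed.

Lemma no_single_valley s' :
  ucycle_in succT (rev_rel arcC) s' -> #|peaks (rev_rel arcC) s'| != 1.
Proof.
rewrite ucycle_in_rev => s'_cyc; have [Us' _ cyc_s' _] := and4P s'_cyc.
by rewrite (card_peaks_rev arc_card_lt Us' cyc_s') no_single_peak.
Qed.

Lemma dpath_unique t sg p1 p2 : t \in T -> dpath C t p1 sg -> dpath C t p2 sg -> p1 = p2.
Proof.
move=> /T_sub_succW tS /and3P [ep1 /eqP l1 _] /and3P [ep2 /eqP l2 _].
apply: (path_unique arc_card_lt no_single_peak ep1 ep2); rewrite ?l1 ?l2 //.
- exact: succW_path ep1.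
- exact: succW_path ep2.
Qed.

Lemma succW_peaks_le1 t : t \in T -> #|succW C [set t] :&: peaks arcC s| <= 1.
Proof.
move=> /T_sub_succW tS; rewrite leqNgt; apply/negP => /card_gt1P [u [u' [+ + uu']]].
rewrite !in_setI !mem_succW1 => /andP [tu u_pk] /andP [tu' u'_pk].
have t_path p : path arcC t p -> succT (last t p) -> all succT (t :: p).
  by move=> ep _; apply: succW_path ep.
have [s' s'_cyc lt_s's] :=
  fewer_peaks arc_card_lt no_single_peak t_path s_cyc u_pk u'_pk tu tu' uu'.
by move: (s_min s'_cyc); rewrite leqNgt lt_s's.
Qed.

Lemma predw_valleys_le1 sg : #|predw C sg :&: peaks (rev_rel arcC) s| <= 1.
Proof.
rewrite leqNgt; apply/negP => /card_gt1P [l [l' [+ + ll']]].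
rewrite !in_setI !mem_predw -!(connect_rev_rel arcC sg) => /andP [sgl l_pk] /andP [sgl' l'_pk].
have s_cyc' : ucycle_in succT (rev_rel arcC) s by rewrite ucycle_in_rev.
have [s' s'_cyc lt_s's] := fewer_peaks rev_arc_rank no_single_valley
  (@succW_rev_path sg) s_cyc' l_pk l'_pk sgl sgl' ll'.
rewrite ucycle_in_rev in s'_cyc; have [Us' _ cyc_s' _] := and4P s'_cyc.
have [Us _ cyc_s _] := and4P s_cyc.
rewrite (card_peaks_rev arc_card_lt Us' cyc_s') (card_peaks_rev arc_card_lt Us cyc_s) in lt_s's.
by move: (s_min s'_cyc); rewrite leqNgt lt_s's.
Qed.

End MinimalCycle.

End Linearization.

Theorem lemma3p12 (n : nat) (M : {set {set 'I_n}}) (C : {set {set {set 'I_n}}})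
  (T : {set {set 'I_n}}) :
  is_linearization M C -> consistent M C -> simple_lin M C ->
  T \subset Proper M ->
  (exists (VZ : {set {set 'I_n}}) (AZ : {set ({set 'I_n} * {set 'I_n})}),
      [/\ subgraph M C VZ AZ, und_cycle VZ AZ & VZ \subset succW C T]) ->
  exists (VZ : {set {set 'I_n}}) (AZ : {set ({set 'I_n} * {set 'I_n})}),
    [/\ subgraph M C VZ AZ, und_cycle VZ AZ, VZ \subset succW C T &
      #|upper VZ AZ| = 1 \/
      [/\ (forall s t, s \in Sing n -> t \in T ->
             forall p1 p2, dpath C t p1 s -> dpath C t p2 s -> p1 = p2),
          (forall s, s \in Sing n -> #|predw C s :&: lower VZ AZ| <= 1) &
          (forall t, t \in T -> #|succW C [set t] :&: upper VZ AZ| <= 1)]].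
Proof.
move=> HL HC HS HT [VZ [AZ [[_ AZ_arcs] VZ_cycle /subsetP VZ_succ]]].
have AZ_arc u v : (u, v) \in AZ -> Defs.arc C u v by case/AZ_arcs.
have [s s_cyc s_min] := ex_minimizer (fun s => #|peaks (Defs.arc C) s|)
  (ucycle_in_of_und_cycle (A := [in succW C T]) AZ_arc VZ_cycle VZ_succ).
have [Us s_gt2 _ s_succ] := and4P s_cyc.
exists [set x in s], (cycle_arcs (Defs.arc C) s).
rewrite upper_cycle_arcs // lower_cycle_arcs //; split.
- exact (subgraph_cycle_arcs HL HT s_succ).
- exact (und_cycle_cycle_arcs (arc_card_lt HC HS) s_cyc).
- by apply/subsetP => v; rewrite inE => /(allP s_succ).
have [one | not_one] := eqVneq #|peaks (Defs.arc C) s| 1; [by left | right].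
split=> [sg t _ tT p1 p2 | sg _ | t tT].
- exact: (dpath_unique HC HS s_cyc s_min not_one tT).
- exact: (predw_valleys_le1 HC HS s_cyc s_min not_one sg).
- exact: (succW_peaks_le1 HC HS s_cyc s_min not_one tT).
Qed.
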